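(* For every nonnegative integer $n$, $${}_{2}F_1\!\left[\begin{matrix}-3n & -3n+\frac12\\ & -4n+\frac23\end{matrix}\,\Big|\,\frac43\right]=\frac{1}{4^n}\,{}_{2}F_1\!\left[\begin{matrix}-n & -n+\frac12\\ & -2n+\frac56\end{matrix}\,\Big|\,1\right].$$
   Context: For complex parameters $\alpha_0,\alpha_1,\beta_1$ and $z\in\mathbb{C}$, ${}_2F_1\!\left[\begin{matrix}\alpha_0&\alpha_1\\&\beta_1\end{matrix}\Big|\,z\right]=\sum_{k\ge0}\frac{(\alpha_0)_k(\alpha_1)_k}{(\beta_1)_k}\frac{z^k}{k!}$, where $(\alpha)_0=1$ and $(\alpha)_k=\alpha(\alpha+1)\cdots(\alpha+k-1)$ for $k\ge1$. Since the first upper parameter is a nonpositive integer ($-3n$, resp. $-n$), both series terminate (at $k=3n$, resp. $k=n$), and the lower parameters are never nonpositive integers, so both sides are finite sums. *)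

From HB Require Import structures.
From mathcomp Require Import all_boot all_order all_algebra.
Set Implicit Arguments. Unset Strict Implicit. Unset Printing Implicit Defensive.
Import Order.TTheory GRing.Theory Num.Theory.
Local Open Scope ring_scope.

Definition poch (R : ringType) (a : R) (k : nat) : R :=
  \prod_(i < k) (a + i%:R).

Definition hyp2F1_term (R : fieldType) (a0 a1 b1 z : R) (k : nat) : R :=
  poch a0 k * poch a1 k / poch b1 k * z ^+ k / (k`!)%:R.

(* Partial sum of the 2F1 series over k = 0..N.  When a0 = -N this is the
   full (terminating) hypergeometric series, since (a0)_k = 0 for k > N. *)
Definition hyp2F1_upto (R : fieldType) (a0 a1 b1 z : R) (N : nat) : R :=
  \sum_(k < N.+1) hyp2F1_term a0 a1 b1 z k.

From HB Require Import structures.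
From mathcomp Require Import all_boot all_order all_algebra.
From mathcomp Require Import ring zify.
Import GRing.Theory Num.Theory.
Set Implicit Arguments. Unset Strict Implicit. Unset Printing Implicit Defensive.
Local Open Scope ring_scope.

(* Creative telescoping (Zeilberger's method).  Call L(n) and F(n) the two
   terminating sums.  For each side there is a rational function C(k) (the
   certificate) such that G(k) = t_{n+1}(k) C(k), with t_{n+1} the summand of
   the (n+1)-st sum, telescopes the combination of summands of the two
   consecutive sums; summing over k then gives the first-order recurrences
     4 (12n+1)(12n+7) L(n+1) = 2 (3n+2)(6n+1) L(n),
       (12n+1)(12n+7) F(n+1) = 2 (3n+2)(6n+1) F(n).
   As L(0) = F(0) = 1, it follows that 4^n L(n) = F(n). *)

Section Pochhammer.
Variable R : nzRingType.
Implicit Types (a : R) (m k : nat).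

Lemma pochS a k : poch a k.+1 = poch a k * (a + k%:R).
Proof. by rewrite /poch big_ord_recr. Qed.

Lemma poch_add a m k : poch a (m + k) = poch a m * poch (a + m%:R) k.
Proof.
elim: k => [|k IHk]; first by rewrite addn0 /poch big_ord0 mulr1.
by rewrite addnS !pochS IHk -mulrA natrD addrA.
Qed.

Lemma poch_negn_eq0 m k : (m < k)%N -> poch (- m%:R : R) k = 0.
Proof. by move=> /subnKC <-; rewrite poch_add pochS addNr mulr0 mul0r. Qed.

End Pochhammer.

Lemma poch_neq0 (R : idomainType) (a : R) k :
  (forall i, (i < k)%N -> a + i%:R != 0) -> poch a k != 0.
Proof. by move=> ak; apply/prodf_neq0 => i _; apply: ak. Qed.

Section HypergeometricTerm.
Variable R : fieldType.
Implicit Types (z : R) (m N M k : nat).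

Lemma poch_shift (a0 : R) m k : poch a0 m != 0 ->
  poch (a0 + m%:R) k = poch a0 k * poch (a0 + k%:R) m / poch a0 m.
Proof. by move=> am; rewrite -poch_add addnC poch_add [poch a0 m * _]mulrC mulfK. Qed.

(* No side condition: in a field (x * y)^-1 = x^-1 * y^-1 even when x = 0. *)
Lemma hyp2F1_termS (a0 a1 b1 : R) z k :
  hyp2F1_term a0 a1 b1 z k.+1 =
  hyp2F1_term a0 a1 b1 z k * ((a0 + k%:R) * (a1 + k%:R) / (b1 + k%:R) * z / k.+1%:R).
Proof. by rewrite /hyp2F1_term !pochS exprS factS natrM !invfM; ring. Qed.


Lemma hyp2F1_term_shift (a0 a1 b1 : R) z (m0 m1 m2 : nat) k :
  poch a0 m0 != 0 -> poch a1 m1 != 0 -> poch b1 m2 != 0 ->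
  hyp2F1_term (a0 + m0%:R) (a1 + m1%:R) (b1 + m2%:R) z k =
  hyp2F1_term a0 a1 b1 z k * (poch (a0 + k%:R) m0 / poch a0 m0)
    * (poch (a1 + k%:R) m1 / poch a1 m1) * (poch b1 m2 / poch (b1 + k%:R) m2).
Proof.
move=> a0m a1m b1m; rewrite /hyp2F1_term (poch_shift k a0m) (poch_shift k a1m).
by rewrite (poch_shift k b1m) !invfM invrK; ring.
Qed.

Lemma hyp2F1_term_negn_eq0 (a1 b1 : R) z N k :
  (N < k)%N -> hyp2F1_term (- N%:R) a1 b1 z k = 0.
Proof. by move=> Nk; rewrite /hyp2F1_term poch_negn_eq0 // !mul0r. Qed.

Lemma hyp2F1_upto0 (a0 a1 b1 : R) z : hyp2F1_upto a0 a1 b1 z 0 = 1.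
Proof. by rewrite /hyp2F1_upto big_ord1 /hyp2F1_term /poch !big_ord0 expr0 invr1 !mulr1. Qed.

Lemma hyp2F1_upto_widen (a1 b1 : R) z N M : (N <= M)%N ->
  hyp2F1_upto (- N%:R) a1 b1 z N = hyp2F1_upto (- N%:R) a1 b1 z M.
Proof.
move=> NM; rewrite /hyp2F1_upto (big_ord_widen M.+1) // big_mkcond /=.
apply: eq_bigr => k _; case: ifPn => // /negbTE; rewrite ltnS => /negbT.
by rewrite -ltnNge => /hyp2F1_term_negn_eq0 ->.
Qed.

Lemma hyp2F1_upto_recurrence (c0 c1 : R) (G : nat -> R) N N' (a1 b1 z a1' b1' z' : R) :
  (N <= N')%N -> G 0%N = 0 -> G N'.+1 = 0 ->
  (forall k, c0 * hyp2F1_term (- N'%:R) a1' b1' z' k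
             - c1 * hyp2F1_term (- N%:R) a1 b1 z k = G k.+1 - G k) ->
  c0 * hyp2F1_upto (- N'%:R) a1' b1' z' N' = c1 * hyp2F1_upto (- N%:R) a1 b1 z N.
Proof.
move=> NN' G0 GN' certG; apply/eqP; rewrite -subr_eq0; apply/eqP.
rewrite (hyp2F1_upto_widen _ _ _ NN') /hyp2F1_upto !mulr_sumr -sumrB.
under eq_bigr do rewrite certG.
by rewrite -(big_mkord xpredT (fun k => G k.+1 - G k)) telescope_sumr // G0 GN' subr0.
Qed.

End HypergeometricTerm.

Lemma poch_negn_neq0 (R : numDomainType) (m k : nat) :
  (k <= m)%N -> poch (- m%:R : R) k != 0.
Proof.
move=> km; apply: poch_neq0 => i ik; rewrite addrC subr_eq0 eqr_nat.
by rewrite neq_ltn (leq_trans ik km).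
Qed.

Lemma poch_frac_neq0 (R : numFieldType) (m u d k : nat) :
  (0 < d)%N -> ~~ (d %| u)%N -> poch (- m%:R + u%:R / d%:R : R) k != 0.
Proof.
move=> d_gt0 ndu; apply: poch_neq0 => i _; apply: contra ndu => /eqP root.
have dR : d%:R != 0 :> R by rewrite pnatr_eq0 -lt0n.
have /eqP : (u + i * d)%:R = (m * d)%:R :> R.
  apply/eqP; rewrite -subr_eq0 -(mul0r d%:R) -root !mulrDl mulfVK // natrD !natrM.
  by apply/eqP; ring.
by rewrite eqr_nat => /eqP uid; rewrite -(dvdn_addl _ (dvdn_mull i (dvdnn d))) uid dvdn_mull.
Qed.

(* Proves [e != 0] for an expression [e] built from numerals, [+], [-], [*]
   and casts of naturals, by reading [e] as the cast of an integer. *)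
Ltac int_expr_neq0 :=
  rewrite -[1 : _]/(1%:~R) !pmulrn ?mulrzA_C -?(intrD, intrM, intrN) intr_eq0; lia.

Definition rec_lead (R : nzRingType) (x : R) : R := (12%:R * x + 1) * (12%:R * x + 7%:R).
Definition rec_tail (R : nzRingType) (x : R) : R := 2%:R * (3%:R * x + 2%:R) * (6%:R * x + 1).

Lemma rec_lead_neq0 (R : numDomainType) (n : nat) : rec_lead (n%:R : R) != 0.
Proof. by rewrite mulf_neq0 //; int_expr_neq0. Qed.

Definition lhs_sum (R : fieldType) (n : nat) : R :=
  hyp2F1_upto (- (3 * n)%:R) (- (3 * n)%:R + 1 / 2%:R)
    (- (4 * n)%:R + 2%:R / 3%:R) (4%:R / 3%:R) (3 * n).

Definition rhs_sum (R : fieldType) (n : nat) : R :=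
  hyp2F1_upto (- n%:R) (- n%:R + 1 / 2%:R) (- (2 * n)%:R + 5%:R / 6%:R) 1 n.

(* Certificates produced by Zeilberger's algorithm.  The large coefficients of
   [lhs_cert] are written as products because numerals are unary naturals. *)
Definition lhs_cert (R : fieldType) (x k : R) : R :=
  let y := 3%:R * x in
  (3%:R * x + 2%:R) * (6%:R * x + 1) / 16%:R *
  (k * (-432%:R - 3178%:R * y - (2%:R * 3719%:R) * y^+2 - (2%:R * 3652%:R) * y^+3
        - 3128%:R * y^+4 - 480%:R * y^+5)
   + k^+2 * (1625%:R + (5%:R * 1343%:R) * y + (2%:R * 4998%:R) * y^+2
             + (2%:R * 3008%:R) * y^+3 + 1224%:R * y^+4)
   + k^+3 * (-812%:R - 2456%:R * y - 2760%:R * y^+2 - 912%:R * y^+3)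
   + k^+4 * (-701%:R - 741%:R * y - 58%:R * y^+2)
   + k^+5 * (560%:R + 320%:R * y) - 96%:R * k^+6).

Definition rhs_cert (R : fieldType) (x k : R) : R :=
  (k * (-15%:R - 226%:R * x - 588%:R * x^+2 - 432%:R * x^+3)
  + k^+2 * (104%:R + 468%:R * x + 504%:R * x^+2) + k^+3 * (-84%:R - 144%:R * x)) / 2%:R.

Section LeftSide.
Variables (R : numFieldType) (n : nat).
Let x : R := n%:R.
Let a0 : R := - (3 * n.+1)%:R.
Let a1 : R := a0 + 1 / 2%:R.
Let b1 : R := - (4 * n.+1)%:R + 2%:R / 3%:R.
Let z : R := 4%:R / 3%:R.
Let ratio (k : nat) : R := poch (a0 + k%:R) 3 / poch a0 3
  * (poch (a1 + k%:R) 3 / poch a1 3) * (poch b1 4 / poch (b1 + k%:R) 4).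
Let C (k : nat) : R :=
  lhs_cert x k%:R * poch b1 4 / (poch a0 3 * poch a1 3 * poch (b1 + k%:R) 4).
Let G (k : nat) : R := hyp2F1_term a0 a1 b1 z k * C k.

Lemma lhs_cert_identity k :
  4%:R * rec_lead x - rec_tail x * ratio k
  = (a0 + k%:R) * (a1 + k%:R) / (b1 + k%:R) * z / k.+1%:R * C k.+1 - C k.
Proof.
rewrite /ratio /C /a1 /a0 /b1 /z /x /lhs_cert /rec_lead /rec_tail /poch.
rewrite !big_ord_recr !big_ord0 /= !mul1r.
by field; rewrite -?andbA; repeat (apply/andP; split); int_expr_neq0.
Qed.

Lemma lhs_term_recurrence k :
  4%:R * rec_lead x * hyp2F1_term a0 a1 b1 z k
  - rec_tail x * hyp2F1_term (- (3 * n)%:R) (- (3 * n)%:R + 1 / 2%:R)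
                   (- (4 * n)%:R + 2%:R / 3%:R) z k
  = G k.+1 - G k.
Proof.
have -> : - (3 * n)%:R + 1 / 2%:R = a1 + 3%:R by rewrite /a1 /a0; ring.
have -> : - (3 * n)%:R = a0 + 3%:R by rewrite /a0; ring.
have -> : - (4 * n)%:R + 2%:R / 3%:R = b1 + 4%:R by rewrite /b1; ring.
have a0_neq0 : poch a0 3 != 0 by rewrite poch_negn_neq0 // mulnS leq_addr.
have a1_neq0 : poch a1 3 != 0 by apply: (@poch_frac_neq0 _ _ 1 2 3).
have b1_neq0 : poch b1 4 != 0 by apply: (@poch_frac_neq0 _ _ 2 3 4).
rewrite hyp2F1_term_shift // /G hyp2F1_termS.
set T := hyp2F1_term a0 a1 b1 z k.
transitivity (T * (4%:R * rec_lead x - rec_tail x * ratio k)); first by rewrite /ratio; ring.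
by rewrite lhs_cert_identity; ring.
Qed.

Lemma lhs_sum_recurrence :
  4%:R * rec_lead x * lhs_sum R n.+1 = rec_tail x * lhs_sum R n.
Proof.
apply: (hyp2F1_upto_recurrence (G := G)); first by rewrite leq_mul2l ltnW.
- have cert0 : lhs_cert x 0%:R = 0 by rewrite /lhs_cert; ring.
  by rewrite /G /C cert0 !mul0r mulr0.
- by rewrite /G hyp2F1_term_negn_eq0 ?mul0r.
- exact: lhs_term_recurrence.
Qed.

End LeftSide.

Section RightSide.
Variables (R : numFieldType) (n : nat).
Let x : R := n%:R.
Let a0 : R := - n.+1%:R.
Let a1 : R := a0 + 1 / 2%:R.
Let b1 : R := - (2 * n.+1)%:R + 5%:R / 6%:R.
Let ratio (k : nat) : R := poch (a0 + k%:R) 1 / poch a0 1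
  * (poch (a1 + k%:R) 1 / poch a1 1) * (poch b1 2 / poch (b1 + k%:R) 2).
Let C (k : nat) : R :=
  rhs_cert x k%:R * poch b1 2 / (poch a0 1 * poch a1 1 * poch (b1 + k%:R) 2).
Let G (k : nat) : R := hyp2F1_term a0 a1 b1 1 k * C k.

Lemma rhs_cert_identity k :
  rec_lead x - rec_tail x * ratio k
  = (a0 + k%:R) * (a1 + k%:R) / (b1 + k%:R) * 1 / k.+1%:R * C k.+1 - C k.
Proof.
rewrite /ratio /C /a1 /a0 /b1 /x /rhs_cert /rec_lead /rec_tail /poch.
rewrite !big_ord_recr !big_ord0 /= !mul1r.
by field; rewrite -?andbA; repeat (apply/andP; split); int_expr_neq0.
Qed.

Lemma rhs_term_recurrence k :
  rec_lead x * hyp2F1_term a0 a1 b1 1 k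
  - rec_tail x * hyp2F1_term (- n%:R) (- n%:R + 1 / 2%:R)
                   (- (2 * n)%:R + 5%:R / 6%:R) 1 k
  = G k.+1 - G k.
Proof.
have -> : - n%:R + 1 / 2%:R = a1 + 1%:R :> R by rewrite /a1 /a0; ring.
have -> : - n%:R = a0 + 1%:R :> R by rewrite /a0; ring.
have -> : - (2 * n)%:R + 5%:R / 6%:R = b1 + 2%:R :> R by rewrite /b1; ring.
have a0_neq0 : poch a0 1 != 0 by rewrite poch_negn_neq0.
have a1_neq0 : poch a1 1 != 0 by apply: (@poch_frac_neq0 _ _ 1 2 1).
have b1_neq0 : poch b1 2 != 0 by apply: (@poch_frac_neq0 _ _ 5 6 2).
rewrite hyp2F1_term_shift // /G hyp2F1_termS.
set T := hyp2F1_term a0 a1 b1 1 k.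
transitivity (T * (rec_lead x - rec_tail x * ratio k)); first by rewrite /ratio; ring.
by rewrite rhs_cert_identity; ring.
Qed.

Lemma rhs_sum_recurrence : rec_lead x * rhs_sum R n.+1 = rec_tail x * rhs_sum R n.
Proof.
apply: (hyp2F1_upto_recurrence (G := G)); first exact: leqnSn.
- have cert0 : rhs_cert x 0%:R = 0 by rewrite /rhs_cert; ring.
  by rewrite /G /C cert0 !mul0r mulr0.
- by rewrite /G hyp2F1_term_negn_eq0 ?mul0r.
- exact: rhs_term_recurrence.
Qed.

End RightSide.

Lemma lhs_sum_scaled (R : numFieldType) (n : nat) : 4%:R ^+ n * lhs_sum R n = rhs_sum R n.
Proof.
elim: n => [|n IHn]; first by rewrite /lhs_sum /rhs_sum muln0 !hyp2F1_upto0 mul1r.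
apply: (mulfI (rec_lead_neq0 R n)).
by rewrite rhs_sum_recurrence -IHn [RHS]mulrCA -lhs_sum_recurrence exprS; ring.
Qed.

Theorem lemma2p1 (n : nat) :
  hyp2F1_upto (- (3 * n)%:R : rat) (- (3 * n)%:R + 1 / 2%:R)
    (- (4 * n)%:R + 2%:R / 3%:R) (4%:R / 3%:R) (3 * n)
  = (4%:R ^+ n)^-1 *
    hyp2F1_upto (- n%:R : rat) (- n%:R + 1 / 2%:R)
      (- (2 * n)%:R + 5%:R / 6%:R) 1 n.
Proof.
rewrite -[hyp2F1_upto _ _ _ _ n]/(rhs_sum rat n) -lhs_sum_scaled.
by rewrite mulKf // expf_neq0 // pnatr_eq0.
Qed.
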